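(* Let $(G,\{1\},N\setminus\{1\})$ be a Stackelberg game with the single leader $1$. Then $\mathbf{X}^{SCE}=\mathbf{X}^{SCE\text{-}PA}=\mathbf{X}^{SCE\text{-}PAPE}$, and for every $\mathbf{x}=[x_\pi]\in\mathbf{X}^{SCE}$, the distribution $x_\varnothing$ maximizes $u_1$ over $\mathcal{X}^{CE}_{N\setminus\{1\}}$ (i.e. $x_\varnothing$ is an optimal correlated strategy to commit to).
   Context: A finite game is $G=(N,\{S_p\}_{p\in N},\{u_p\}_{p\in N})$ with players $N=\{1,\dots,n\}$, finite nonempty strategy sets $S_p$, and utilities $u_p:S\to\mathbb{R}$ on $S=\prod_{p\in N}S_p$; write $s=(s_p,s_{-p})$ with $s_{-p}\in S_{-p}=\prod_{q\neq p}S_q$. $\mathcal{X}=\Delta(S)$ is the set of probability distributions on $S$ and $u_p(x)=\sum_{s\in S}x(s)u_p(s)$ for $x\in\mathcal{X}$. For $P\subseteq N$, $\mathcal{X}^{CE}_P$ is the set of $x\in\mathcal{X}$ such that for every $p\in P$ and all $s_p\neq s_p'\in S_p$: $\sum_{s_{-p}\in S_{-p}} x(s_p,s_{-p})\,(u_p(s_p,s_{-p})-u_p(s_p',s_{-p}))\ge 0$; $\mathcal{X}^{CE}=\mathcal{X}^{CE}_N$ is the set of correlated equilibria of $G$. A Stackelberg game (SG) is a triple $(G,L,F)$ with $L\cup F=N$ and $L\cap F=\emptyset$ (leaders and followers). For $P\subseteq N$, $\Pi_P$ is the set of ordered subsets of $P$ (finite sequences of pairwise distinct elements of $P$, including the empty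 sequence $\varnothing$); for $\pi\in\Pi_P$ and $p\in P$ not occurring in $\pi$, $\pi p$ is $\pi$ with $p$ appended; when used as a set, $\pi$ means its set of entries. $\mathbf{X}=\prod_{\pi\in\Pi_L}\mathcal{X}^{CE}_{\pi\cup F}$, with elements $\mathbf{x}=[x_\pi]_{\pi\in\Pi_L}$. For $\mathbf{x}\in\mathbf{X}$ and $\pi\in\Pi_L$, $x_\pi$ is stable if $u_p(x_\pi)\ge u_p(x_{\pi p})$ for all $p\in L\setminus\pi$; $\mathbf{x}$ is stable if $x_\varnothing$ is stable, and perfectly stable if $x_\pi$ is stable for every $\pi\in\Pi_L$; $\mathbf{X}^{S}$ and $\mathbf{X}^{PS}$ denote the sets of stable and perfectly stable elements of $\mathbf{X}$. For $\mathbf{X}'\subseteq\mathbf{X}$ and $\pi\in\Pi_L$, $\mathcal{P}_{L\setminus\pi}(\mathbf{X}')$ is the set of Pareto optimal elements of $\{x'_\pi:\mathbf{x}'\in\mathbf{X}'\}$ with respect to the objectives $u_p$, $p\in L\setminus\pi$ (an element $y$ of the set is Pareto optimal if no $y'$ in the set satisfies $u_p(y')\ge u_p(y)$ for all $p\in L\setminus\pi$ with strict inequality for some such $p$). $\mathbf{x}\in\mathbf{X}$ is an SCE if $\mathbf{x}\in\mathbf{X}^S$ and $x_\varnothing\in\mathcal{P}_L(\mathbf{X}^S)$; an SCE-PA if $\mathbf{x}\in\mathbf{X}^{PS}$ and $x_\varnothing\in\mathcal{P}_L(\mathbf{X}^{PS})$; an SCE-PAPE if $\mathbf{x}\in\mathbf{X}^{PS}$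 and $x_\pi\in\mathcal{P}_{L\setminus\pi}(\mathbf{X}^{PS})$ for every $\pi\in\Pi_L$. The corresponding sets are $\mathbf{X}^{SCE}$, $\mathbf{X}^{SCE\text{-}PA}$, $\mathbf{X}^{SCE\text{-}PAPE}$. *)

(* Utilities take values in an arbitrary realFieldType R
   (in particular the reals); everything in the statement is order-algebraic. *)
From HB Require Import structures.
From mathcomp Require Import all_boot all_order all_algebra.
Set Implicit Arguments. Unset Strict Implicit. Unset Printing Implicit Defensive.
Import Order.TTheory GRing.Theory Num.Theory.
Local Open Scope ring_scope.

Section Game.
Variables (R : realFieldType) (n : nat) (S : 'I_n -> finType).

Definition sprofile := {dffun forall p : 'I_n, S p}.

Definition upd (s : sprofile) (p : 'I_n) (b : S p) : sprofile :=
  [ffun q => dfwith (fun q => s q) b q].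

Variable u : 'I_n -> sprofile -> R.

Definition is_dist (x : {ffun sprofile -> R}) : Prop :=
  (forall s, 0 <= x s) /\ \sum_(s : sprofile) x s = 1.

Definition U (p : 'I_n) (x : {ffun sprofile -> R}) : R :=
  \sum_(s : sprofile) x s * u p s.

Definition CE (P : {set 'I_n}) (x : {ffun sprofile -> R}) : Prop :=
  is_dist x /\
  forall p, p \in P -> forall a b : S p, a != b ->
    0 <= \sum_(s : sprofile | s p == a) x s * (u p s - u p (upd s b)).

Variable L : {set 'I_n}.
Definition F : {set 'I_n} := ~: L.

(* Pi_L : ordered subsets of L (duplicate-free sequences of elements of L) *)
Definition ordsub (pi : seq 'I_n) : bool := uniq pi && all (mem L) pi.

(* A family [x_pi]_pi is represented by a function on all sequences; only its
   values on ordered subsets of L are ever used. *)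
Definition sfamily := seq 'I_n -> {ffun sprofile -> R}.

Definition inX (xx : sfamily) : Prop :=
  forall pi, ordsub pi -> CE ([set p in pi] :|: F) (xx pi).

Definition stable_at (xx : sfamily) (pi : seq 'I_n) : Prop :=
  forall p, p \in L -> p \notin pi -> U p (xx (rcons pi p)) <= U p (xx pi).

Definition stableX (xx : sfamily) : Prop := inX xx /\ stable_at xx [::].
Definition pstableX (xx : sfamily) : Prop :=
  inX xx /\ forall pi, ordsub pi -> stable_at xx pi.

Definition pareto (X' : sfamily -> Prop) (pi : seq 'I_n)
    (y : {ffun sprofile -> R}) : Prop :=
  (exists2 x', X' x' & x' pi = y) /\
  ~ (exists2 x', X' x' &
       (forall p, p \in L -> p \notin pi -> U p y <= U p (x' pi)) /\
       (exists p, [/\ p \in L, p \notin pi & U p y < U p (x' pi)])).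

Definition SCE (xx : sfamily) : Prop :=
  stableX xx /\ pareto stableX [::] (xx [::]).
Definition SCE_PA (xx : sfamily) : Prop :=
  pstableX xx /\ pareto pstableX [::] (xx [::]).
Definition SCE_PAPE (xx : sfamily) : Prop :=
  pstableX xx /\ forall pi, ordsub pi -> pareto pstableX pi (xx pi).

End Game.

From HB Require Import structures.
From mathcomp Require Import all_boot all_order all_algebra.
Set Implicit Arguments. Unset Strict Implicit. Unset Printing Implicit Defensive.
Import Order.TTheory GRing.Theory Num.Theory.
Local Open Scope ring_scope.

(* Call an ordered subset pi of the leaders L "saturated" when every leader
   already occurs in pi.  At a saturated pi there is no leader left to move,
   so stability at pi holds vacuously and x_pi is trivially Pareto optimal
   (there is no objective to improve).  With a single leader l, every
   nonempty ordered subset of {l} is saturated; hence stability coincides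
   with perfect stability, so the three solution concepts SCE, SCE-PA and
   SCE-PAPE coincide.

   For optimal commitment: if some y in X^CE_{N\{l}} gave the leader more
   than x_empty, replacing x_empty by y in a stable family keeps it in X
   (the constraint set at pi = [::] is exactly X^CE_F) and keeps it stable
   (u_l(x_{[l]}) <= u_l(x_empty) < u_l(y)), while strictly improving the
   leader: this contradicts the Pareto optimality of x_empty. *)

Section Saturated.
Variables (R : realFieldType) (n : nat) (S : 'I_n -> finType)
  (u : 'I_n -> sprofile S -> R) (L : {set 'I_n}).

Lemma stable_at_saturated (xx : sfamily R S) (pi : seq 'I_n) :
  {subset L <= pi} -> stable_at u L xx pi.
Proof. by move=> sLpi p /sLpi pi_p; rewrite pi_p. Qed.

Lemma pareto_saturated (X' : sfamily R S -> Prop) (xx : sfamily R S)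
    (pi : seq 'I_n) :
  {subset L <= pi} -> X' xx -> pareto u L X' pi (xx pi).
Proof.
move=> sLpi X'xx; split; first by exists xx.
by case=> x' _ [_ [p [/sLpi pi_p]]]; rewrite pi_p.
Qed.

Lemma pareto_ext (X1 X2 : sfamily R S -> Prop) (pi : seq 'I_n) y :
  (forall xx, X1 xx <-> X2 xx) -> pareto u L X1 pi y -> pareto u L X2 pi y.
Proof.
move=> eqX [[x' /eqX X2x' <-] notdom]; split; first by exists x'.
by case=> x'' /eqX X1x'' dom; apply: notdom; exists x''.
Qed.

Definition set_root (xx : sfamily R S) (y : {ffun sprofile S -> R}) :
    sfamily R S :=
  fun pi => if pi is [::] then y else xx pi.

(* At the root only the followers' incentive constraints are imposed, so any
   correlated equilibrium of the followers may be placed there. *)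
Lemma inX_set_root (xx : sfamily R S) y :
  inX u L xx -> CE u (F L) y -> inX u L (set_root xx y).
Proof.
move=> Xxx CEy [|p pi] ordpi; last exact: Xxx.
have no_leader : [set p in [::]] = set0 :> {set 'I_n}.
  by apply/setP => p; rewrite !inE.
by rewrite /= no_leader set0U.
Qed.

Lemma stable_set_root (xx : sfamily R S) y :
  stable_at u L xx [::] -> (forall p, p \in L -> U u p (xx [::]) <= U u p y) ->
  stable_at u L (set_root xx y) [::].
Proof.
by move=> st le_root p Lp pi_p; apply: le_trans (st p Lp pi_p) (le_root p Lp).
Qed.

End Saturated.

Section SingleLeader.
Variables (R : realFieldType) (n : nat) (S : 'I_n -> finType)
  (u : 'I_n -> sprofile S -> R) (l : 'I_n).

Lemma single_leader_saturated (pi : seq 'I_n) :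
  ordsub [set l] pi -> pi != [::] -> {subset [set l] <= pi}.
Proof.
case: pi => [//|a pi] /andP[_ /andP[La _]] _ p.
by move: La; rewrite !inE => /eqP-> /eqP->; exact: mem_head.
Qed.

Lemma stableX_pstableX (xx : sfamily R S) :
  stableX u [set l] xx <-> pstableX u [set l] xx.
Proof.
split=> [[Xxx st]|[Xxx st]]; split=> //; last exact: st.
move=> pi ordpi; have [->//|pi_ne] := eqVneq pi [::].
exact/stable_at_saturated/single_leader_saturated.
Qed.

Lemma SCE_optimal_commitment (xx : sfamily R S) :
  SCE u [set l] xx ->
  forall y, CE u (~: [set l]) y -> U u l y <= U u l (xx [::]).
Proof.
move=> [[Xxx st] [_ notdom]] y CEy; rewrite leNgt; apply/negP => gain.
have le_root p : p \in [set l] -> U u p (xx [::]) <= U u p y.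
  by rewrite inE => /eqP->; apply: ltW.
apply: notdom; exists (set_root xx y).
  by split; [exact: inX_set_root | exact: stable_set_root].
split=> [p Lp _|]; first exact: le_root.
by exists l; rewrite inE eqxx.
Qed.

End SingleLeader.

(* Players are 'I_n.+1 (0-indexed); the single leader "1" is ord0. *)
Theorem theorem2 (R : realFieldType) (n : nat) (S : 'I_n.+1 -> finType)
    (S_nonempty : forall p, (0 < #|S p|)%N)
    (u : 'I_n.+1 -> sprofile S -> R) :
  (forall xx : sfamily R S,
     (SCE u [set ord0] xx <-> SCE_PA u [set ord0] xx) /\
     (SCE_PA u [set ord0] xx <-> SCE_PAPE u [set ord0] xx)) /\
  (forall xx : sfamily R S, SCE u [set ord0] xx ->
     forall y, CE u (~: [set ord0]) y -> U u ord0 y <= U u ord0 (xx [::])).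
Proof.
split=> [xx|]; last exact: SCE_optimal_commitment.
have stPS := @stableX_pstableX R _ S u ord0.
split; split=> [[st par]|[st par]].
- by split; [exact/stPS | apply: pareto_ext par].
- split; [exact/stPS | apply: pareto_ext par] => x; exact: iff_sym.
- split=> // pi ordpi; have [->//|pi_ne] := eqVneq pi [::].
  by apply: pareto_saturated st; apply: single_leader_saturated.
- by split=> //; apply: par.
Qed.
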